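(* If $y^{(i_1)}$ and $y^{(i_2)}$ are two points lying in the same lap $I_j$, $1\le j\le n$, then $U\,V_\beta\,e_{i_1}=U\,V_\beta\,e_{i_2}$, where $e_i$ denotes the $i$-th standard basis vector of $\mathbb{R}^q$ (the vector representing $y^{(i)}$).
   Context: Setting. $I\subset\mathbb{R}$ compact interval; $f_i(x)=\rho_ix+\varrho_i$ ($i=1,\dots,n$), $0<|\rho_i|<1$, IFS with open set condition; $I$ is the union of a nonempty open interval $I_h$ (hole) and $f_1(I),\dots,f_n(I)$, with pairwise disjoint interiors and $I_h$ disjoint from the $f_i(I)$; $F(x)=f_i^{-1}(x)$ on $f_i(I)$. The laps $I_1,\dots,I_n$ (left to right) and the hole have endpoints $a_1<\dots<a_{n+2}$, hole $(a_h,a_{h+1})$; interior endpoints are turning/discontinuity points. Assume the forward orbit of every one-sided endpoint $a_i^\pm$ is finite. Points $y^{(1)},\dots,y^{(q)}$: the one-sided endpoints $a_1^+,a_2^-,a_2^+,\dots,a_{n+2}^-$ (with $a_i^-,a_i^+$ consecutive) together with all other points of their forward orbits, ordered along $I$. $V_\beta=[v_{ij}]$ ($q\times q$, $\beta\in\mathbb{R}$): if $F(y^{(j)})=y^{(i)}$, $v_{ij}=\varepsilon(y^{(j)})|F'(y^{(j)})|^{-\beta}$ with $\varepsilon$ the sign of $F'$ at $y^{(j)}$ (column zero for limits from inside the hole); for every pair of consecutive entries that are the two one-sided versions of a turning/discontinuity point between $y^{(j)}$ and $y^{(i)}$: if $y^{(i)}>y^{(j)}$, pair $y^{(k)},y^{(k+1)}$,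 $j\le k<i$, set $v_{kj}=v_{ij}$, $v_{k+1,j}=-v_{ij}$; if $y^{(i)}<y^{(j)}$, pair $y^{(k-1)},y^{(k)}$, $i<k\le j$, set $v_{k-1,j}=-v_{ij}$, $v_{kj}=v_{ij}$; all other entries $0$. $U$ is the $n\times q$ matrix with entry $(j,i)$ equal to $1$ if $y^{(i)}$ lies in lap $I_j$ and $0$ otherwise. *)

From HB Require Import structures.
From mathcomp Require Import all_boot all_order all_algebra.
From mathcomp Require Import all_classical all_reals exp.
Set Implicit Arguments.
Unset Strict Implicit.
Unset Printing Implicit Defensive.
Import Order.TTheory GRing.Theory Num.Theory.
Local Open Scope ring_scope.

(* Conventions (0-indexed):
   - endpoints a : 'I_(n+2) -> R, a 0 < a 1 < ... < a (n+1)  (paper: a_1<...<a_{n+2});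
     I = [a 0, a (n+1)].
   - the n+1 pieces between consecutive endpoints are indexed by k : 'I_(n+1);
     piece k is [a k, a (k+1)].  The hole is the open piece h : 'I_(n+1).
   - lap l : 'I_n (laps numbered left to right) is the piece  lift h l
     (= l if l < h, l+1 otherwise).
   - sigma l is the index of the IFS map with f_(sigma l)(I) = lap l, so that
     F = f_(sigma l)^{-1} on lap l.
   - a one-sided point is a pair (x, s) : R * bool; s = true means x^+ (limit
     from the right), s = false means x^- (limit from the left). *)

Section Setting.
Variable R : realType.
Variable n : nat.
Variable a : 'I_n.+2 -> R.
Variable h : 'I_n.+1.
Variables (rho varrho : 'I_n -> R).
Variable sigma : 'I_n -> 'I_n.

Definition pleft (k : 'I_n.+1) : 'I_n.+2 := widen_ord (leqnSn _) k.
Definition pright (k : 'I_n.+1) : 'I_n.+2 := lift ord0 k.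

Definition ifs (i : 'I_n) (x : R) : R := rho i * x + varrho i.

Definition Iset : set R := `[a ord0, a ord_max]%classic.
Definition hole : set R := `]a (pleft h), a (pright h)[%classic.
Definition lap_piece (l : 'I_n) : 'I_n.+1 := lift h l.
Definition lap_set (l : 'I_n) : set R :=
  `[a (pleft (lap_piece l)), a (pright (lap_piece l))]%classic.

(* order "along I" on one-sided points: x^- immediately precedes x^+ *)
Definition osle (p q : R * bool) : bool :=
  (p.1 < q.1) || ((p.1 == q.1) && (p.2 ==> q.2)).
Definition oslt (p q : R * bool) : bool :=
  (p.1 < q.1) || [&& p.1 == q.1, ~~ p.2 & q.2].

Definition piece_of (p : R * bool) : option 'I_n.+1 :=
  [pick k : 'I_n.+1 | if p.2 then (a (pleft k) <= p.1) && (p.1 < a (pright k))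
                      else (a (pleft k) < p.1) && (p.1 <= a (pright k))].

(* the lap containing a one-sided point (None if it lies in the hole) *)
Definition lap_of (p : R * bool) : option 'I_n := obind (unlift h) (piece_of p).

Definition Fos (p : R * bool) : option (R * bool) :=
  if lap_of p is Some l then
    Some ((p.1 - varrho (sigma l)) / rho (sigma l),
          if 0 < rho (sigma l) then p.2 else ~~ p.2)
  else None.

Definition Fder (p : R * bool) : R :=
  if lap_of p is Some l then (rho (sigma l))^-1 else 0.

Fixpoint iterF (k : nat) (p : R * bool) : option (R * bool) :=
  if k is k'.+1 then obind Fos (iterF k' p) else Some p.

Definition endpt (p : R * bool) : Prop :=
  exists m : 'I_n.+2,
    (p = (a m, true) /\ (m < n.+1)%N) \/ (p = (a m, false) /\ (0 < m)%N).

Definition inY (p : R * bool) : Prop :=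
  exists e k, endpt e /\ iterF k e = Some p.

Definition fwd_orbit (e : R * bool) : set (R * bool) :=
  [set p | exists k, iterF k e = Some p].

Variable beta : R.
Variable q : nat.
Variable y : 'I_q -> R * bool.

Definition vcoef (j : 'I_q) : R :=
  Num.sg (Fder (y j)) * powR `|Fder (y j)| (- beta).

(* contribution of the turning/discontinuity point a_m (interior endpoint)
   to entry (r, j), when F(y_j) = p *)
Definition pair_contrib (r j : 'I_q) (p : R * bool) (m : 'I_n.+2) : R :=
  if osle (y j) (a m, false) && osle (a m, true) p then
    (* y^(i) > y^(j): v_{k j} = v_{i j}, v_{k+1, j} = - v_{i j} *)
    (y r == (a m, false))%:R - (y r == (a m, true))%:R
  else if osle p (a m, false) && osle (a m, true) (y j) then
    (* y^(i) < y^(j): v_{k-1, j} = - v_{i j}, v_{k j} = v_{i j} *)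
    (y r == (a m, true))%:R - (y r == (a m, false))%:R
  else 0.

Definition Vbeta : 'M[R]_q :=
  \matrix_(r, j)
    if Fos (y j) is Some p then
      vcoef j * ((y r == p)%:R +
                 \sum_(m : 'I_n.+2 | (0 < m < n.+1)%N) pair_contrib r j p m)
    else 0.

Definition Umx : 'M[R]_(n, q) := \matrix_(l, i) (lap_of (y i) == Some l)%:R.

End Setting.

From HB Require Import structures.
From mathcomp Require Import all_boot all_order all_algebra.
From mathcomp Require Import all_classical all_reals exp.
From mathcomp Require Import zify ring lra.
Set Implicit Arguments.
Unset Strict Implicit.
Unset Printing Implicit Defensive.
Import Order.TTheory GRing.Theory Num.Theory.
Local Open Scope ring_scope.
Local Open Scope classical_set_scope.

(* Column i of V_beta is v_i (e_F(y_i) + sum_m c_m (e_(a_m^-) - e_(a_m^+))), where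
   c_m = [a_m^+ <= F(y_i)] - [a_m^+ <= y_i] is +-1 exactly at the turning points
   a_m between y_i and F(y_i).  Row k of U sums a column over piece k, and a_m^-,
   a_m^+ lie in the pieces m - 1 and m.  If y_i lies in piece k_i and F(y_i) in
   piece k_p, then c_m = [m <= k_p] - [m <= k_i] and the row sum telescopes to
   [k = k_i].  So U V_beta e_i = v_i e_j with j the lap of y_i, and
   v_i = eps |F'|^(-beta) only depends on that lap. *)

Lemma sum_indicator_inj (R : pzSemiRingType) (I : finType) (T : eqType)
    (g : I -> T) (F : I -> R) z i0 :
  injective g -> g i0 = z -> \sum_i F i * (g i == z)%:R = F i0.
Proof.
move=> g_inj gi0; rewrite (bigD1 i0) //= gi0 eqxx mulr1 big1 ?addr0 // => i ni0.
by rewrite -gi0 (inj_eq g_inj) (negbTE ni0) mulr0.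
Qed.

Lemma natr_telescope (R : comPzRingType) (k kp ku : nat) :
  (k == kp)%:R + (((k < kp)%:R - (k < ku)%:R) - ((k <= kp)%:R - (k <= ku)%:R))
  = (k == ku)%:R :> R.
Proof.
by case: (ltngtP k kp); case: (ltngtP k ku) => //= *; ring.
Qed.

Lemma pleftE n (k : 'I_n.+1) : pleft k = k :> nat.
Proof. by []. Qed.

Lemma prightE n (k : 'I_n.+1) : pright k = k.+1 :> nat.
Proof. exact: lift0. Qed.

Section OneSidedOrder.
Variable R : realType.
Implicit Types (x lo hi : R) (u : R * bool).

Definition os_between lo hi u := osle (lo, true) u && osle u (hi, false).

Lemma os_betweenE lo hi x s : os_between lo hi (x, s) =
  if s then (lo <= x) && (x < hi) else (lo < x) && (x <= hi).
Proof.
rewrite /os_between /osle /=.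
case: s; rewrite /= ?andbT ?andbF ?orbF.
- by rewrite (le_eqVlt lo) orbC.
- by rewrite (le_eqVlt x) orbC.
Qed.

Lemma osleC u x : osle u (x, false) = ~~ osle (x, true) u.
Proof.
case: u => z s; rewrite /osle /=.
by case: s; case: ltgtP => //=; rewrite ?andbT ?andbF.
Qed.

Lemma osleT_trans x z u : x <= z -> osle (z, true) u -> osle (x, true) u.
Proof.
case: u => w s; rewrite /osle /= le_eqVlt => /orP[/eqP-> //|xz].
by case/orP=> [zw|/andP[/eqP<- _]]; rewrite ?(lt_trans xz zw) ?xz.
Qed.

Lemma oslt_irr u : oslt u u = false.
Proof. by case: u => x s; rewrite /oslt ltxx eqxx; case: s. Qed.

End OneSidedOrder.

Section Pieces.
Variables (R : realType) (n : nat) (a : 'I_n.+2 -> R).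
Hypothesis a_incr : forall k1 k2 : 'I_n.+2, (k1 < k2)%N -> a k1 < a k2.
Implicit Types (u p : R * bool) (m : 'I_n.+2) (k : 'I_n.+1).

Lemma le_a i j : (a i <= a j) = (i <= j)%N.
Proof. exact: (le_mono a_incr). Qed.

Lemma lt_a i j : (a i < a j) = (i < j)%N.
Proof. exact: (leW_mono le_a). Qed.

Definition in_piece k u := os_between (a (pleft k)) (a (pright k)) u.

Lemma osle_in_piece k u m : in_piece k u -> osle (a m, true) u = (m <= k)%N.
Proof.
case/andP=> lo_u u_hi; case: leqP => [mk | km]; first by apply: osleT_trans lo_u; rewrite le_a.
apply/negbTE/negP => m_u; move: u_hi; rewrite osleC => /negP; apply.
by apply: osleT_trans m_u; rewrite le_a prightE.
Qed.

Lemma in_piece_eq k k' u : in_piece k' u -> in_piece k u = (k == k').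
Proof.
move=> uk'; rewrite /in_piece /os_between osleC !(osle_in_piece _ uk') prightE.
by rewrite -ltnNge -eqn_leq.
Qed.

Lemma in_piece_leftT k m : in_piece k (a m, true) = (m == k :> nat).
Proof. by rewrite /in_piece os_betweenE le_a lt_a pleftE prightE; lia. Qed.

Lemma in_piece_rightF k m : in_piece k (a m, false) = (m == k.+1 :> nat).
Proof. by rewrite /in_piece os_betweenE le_a lt_a pleftE prightE; lia. Qed.

Lemma in_piece_exists u : os_between (a ord0) (a ord_max) u -> exists k, in_piece k u.
Proof.
case/andP=> lo_u u_hi.
have [m m_u m_max] := @arg_maxnP _ ord0 (fun m => osle (a m, true) u)
  (fun m => m : nat) lo_u.
have mn : (m < n.+1)%N.
  rewrite ltnNge; apply/negP => nm; move: u_hi; rewrite osleC => /negP; apply.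
  by apply: osleT_trans m_u; rewrite le_a -ltnS.
exists (Ordinal mn); apply/andP; split.
  by rewrite (_ : pleft _ = m) //; apply: val_inj.
by rewrite osleC; apply/negP => /m_max; rewrite /geq prightE /=; lia.
Qed.

Lemma lap_ofE h u l : (lap_of a h u == Some l) = in_piece (lap_piece h l) u.
Proof.
have pickE k : (if u.2 then (a (pleft k) <= u.1) && (u.1 < a (pright k))
                else (a (pleft k) < u.1) && (u.1 <= a (pright k))) = in_piece k u.
  by case: u => x s; rewrite /in_piece os_betweenE.
rewrite /lap_of /piece_of (eq_pick pickE) /lap_piece.
case: pickP => [k uk | none]; last by rewrite none.
rewrite (in_piece_eq _ uk); case: (unliftP h k) => [l' -> | ->] /=.
  by rewrite liftK (inj_eq lift_inj) eq_sym.
by rewrite unlift_none [lift _ _ == _]eq_sym (negbTE (neq_lift _ _)).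
Qed.

Definition crossing u p m : R := (osle (a m, true) p)%:R - (osle (a m, true) u)%:R.

Lemma crossing_in_piece ku kp u p m : in_piece ku u -> in_piece kp p ->
  crossing u p m = (m <= kp)%:R - (m <= ku)%:R.
Proof. by move=> uk pk; rewrite /crossing (osle_in_piece _ pk) (osle_in_piece _ uk). Qed.

Lemma piece_telescope k ku kp u p : in_piece ku u -> in_piece kp p ->
  (in_piece k p)%:R + \sum_(m : 'I_n.+2 | (0 < m < n.+1)%N)
    crossing u p m * ((in_piece k (a m, false))%:R - (in_piece k (a m, true))%:R)
  = (k == ku)%:R.
Proof.
move=> uk pk; rewrite (in_piece_eq _ pk) big_rmcond => [|m m_bd]; last first.
  rewrite (crossing_in_piece _ uk pk).
  have -> : (m <= kp)%N = (m <= ku)%N by move: (ltn_ord kp) (ltn_ord ku) m_bd; lia.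
  by rewrite subrr mul0r.
under eq_bigr do rewrite in_piece_rightF in_piece_leftT (crossing_in_piece _ uk pk) mulrBr.
rewrite sumrB (sum_indicator_inj _ (@ord_inj _) (prightE k)).
by rewrite (sum_indicator_inj _ (@ord_inj _) (pleftE k)) prightE; apply: natr_telescope.
Qed.

End Pieces.

Section InverseBranch.
Variables (R : realType) (n : nat) (a : 'I_n.+2 -> R) (h : 'I_n.+1).
Variables (rho varrho : 'I_n -> R) (sigma : 'I_n -> 'I_n).
Hypothesis a_incr : forall k1 k2 : 'I_n.+2, (k1 < k2)%N -> a k1 < a k2.
Hypothesis rho_neq0 : forall i, rho i != 0.
Hypothesis lap_image :
  forall l, ifs rho varrho (sigma l) @` Iset a = lap_set a h l.

Lemma lap_endpoint_preimage l (m : 'I_n.+2) :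
  (lap_piece h l <= m <= (lap_piece h l).+1)%N ->
  exists2 w, a ord0 <= w <= a ord_max & ifs rho varrho (sigma l) w = a m.
Proof.
move=> lm; have : lap_set a h l (a m) by rewrite /lap_set /= in_itv /= !le_a // pleftE prightE.
by rewrite -lap_image => -[w]; rewrite /Iset /= in_itv /=; exists w.
Qed.

Lemma Fos_between u l p : lap_of a h u = Some l ->
  Fos a h rho varrho sigma u = Some p -> os_between (a ord0) (a ord_max) p.
Proof.
move=> ul; rewrite /Fos ul => -[<-] {p}.
have := lap_ofE a_incr h u l; rewrite ul eqxx /in_piece => /esym.
have [|w1 /andP[w1_lo w1_hi] fw1] := @lap_endpoint_preimage l (pleft (lap_piece h l)).
  by rewrite pleftE leqnn leqnSn.
have [|w2 /andP[w2_lo w2_hi] fw2] := @lap_endpoint_preimage l (pright (lap_piece h l)).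
  by rewrite prightE leqnn leqnSn.
rewrite -fw1 -fw2 /ifs; case: u {ul} => x s /=.
set r := rho (sigma l); set v := varrho (sigma l); set z := (x - v) / r.
have xE : x = r * z + v by rewrite /z; field; exact: rho_neq0.
rewrite !os_betweenE xE; case: (ltgtP r 0) (rho_neq0 (sigma l)) => // r_sign _;
  by case: s => /andP[x_lo x_hi]; apply/andP; split; nra.
Qed.

End InverseBranch.

Section ColumnsOfUV.
Variables (R : realType) (n : nat) (a : 'I_n.+2 -> R) (h : 'I_n.+1).
Variables (rho varrho : 'I_n -> R) (sigma : 'I_n -> 'I_n) (beta : R).
Variables (q : nat) (y : 'I_q -> R * bool).
Hypothesis a_incr : forall k1 k2 : 'I_n.+2, (k1 < k2)%N -> a k1 < a k2.
Hypothesis rho_neq0 : forall i, rho i != 0.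
Hypothesis lap_image :
  forall l, ifs rho varrho (sigma l) @` Iset a = lap_set a h l.
Hypothesis y_sorted : forall i j : 'I_q, (i < j)%N -> oslt (y i) (y j).
Hypothesis yE : forall p, inY a h rho varrho sigma p <-> exists i, y i = p.

Local Notation Fy := (Fos a h rho varrho sigma).
Local Notation V := (Vbeta a h rho varrho sigma beta y).

Lemma y_inj : injective y.
Proof.
move=> i j yij; case: (ltngtP i j) => [ij | ji | /val_inj //].
  by have := y_sorted ij; rewrite yij oslt_irr.
by have := y_sorted ji; rewrite yij oslt_irr.
Qed.

Lemma y_endpoint (m : 'I_n.+2) s : (0 < m < n.+1)%N -> exists r, y r = (a m, s).
Proof.
case/andP=> m_gt0 m_lt; apply/yE; exists (a m, s), 0%N; split=> //.
by exists m; case: s; [left | right].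
Qed.

Lemma y_Fos i p : Fy (y i) = Some p -> exists r, y r = p.
Proof.
move=> Fyi; have [e [k [e_end ek]]] := proj2 (yE (y i)) (ex_intro _ i erefl).
apply/yE; exists e, k.+1; split=> //; rewrite -Fyi.
exact: (congr1 (obind _) ek).
Qed.

Lemma pair_contribE r j p m : pair_contrib a y r j p m =
  crossing a (y j) p m * ((y r == (a m, false))%:R - (y r == (a m, true))%:R).
Proof.
rewrite /pair_contrib /crossing !osleC.
by case: (osle _ p); case: (osle _ (y j)) => /=; ring.
Qed.

Lemma sum_Vbeta_col (f : R * bool -> R) i p : Fy (y i) = Some p ->
  \sum_(r : 'I_q) f (y r) * V r i = vcoef a h rho sigma beta y i *
    (f p + \sum_(m : 'I_n.+2 | (0 < m < n.+1)%N)
             crossing a (y i) p m * (f (a m, false) - f (a m, true))).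
Proof.
move=> Fyi; have [rp yrp] := y_Fos Fyi.
under eq_bigr => r _ do rewrite mxE Fyi mulrCA mulrDr big_distrr.
rewrite -big_distrr big_split exchange_big /=; congr (_ * (_ + _)).
  by rewrite (sum_indicator_inj _ y_inj yrp) yrp.
apply: eq_bigr => m m_int.
have [r1 yr1] := y_endpoint false m_int; have [r2 yr2] := y_endpoint true m_int.
under eq_bigr do rewrite pair_contribE mulrCA mulrBr.
rewrite -big_distrr sumrB (sum_indicator_inj _ y_inj yr1).
by rewrite (sum_indicator_inj _ y_inj yr2) yr1 yr2.
Qed.

Lemma col_Umx_Vbeta i j : lap_of a h (y i) = Some j ->
  col i (Umx a h y *m V) = vcoef a h rho sigma beta y i *: delta_mx j 0.
Proof.
move=> yij; have [p Fyi] : exists p, Fy (y i) = Some p by rewrite /Fos yij; eexists.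
have [kp pk] := in_piece_exists a_incr (Fos_between a_incr rho_neq0 lap_image yij Fyi).
have yik : in_piece a (lap_piece h j) (y i) by rewrite -lap_ofE // yij.
apply/matrixP => l z; rewrite (ord1 z) mxE [RHS]mxE mxE [delta_mx _ _ _ _]mxE eqxx andbT.
under eq_bigr do rewrite [Umx _ _ _ _ _]mxE lap_ofE //.
rewrite (sum_Vbeta_col (fun u => (in_piece a (lap_piece h l) u)%:R) Fyi).
by rewrite (piece_telescope a_incr _ yik pk) /lap_piece (inj_eq lift_inj).
Qed.

End ColumnsOfUV.

Theorem lemma2 (R : realType) (n : nat) (a : 'I_n.+2 -> R) (h : 'I_n.+1)
    (rho varrho : 'I_n -> R) (sigma : 'I_n -> 'I_n)
    (beta : R) (q : nat) (y : 'I_q -> R * bool) :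
  (* endpoints strictly increasing *)
  (forall k1 k2 : 'I_n.+2, (k1 < k2)%N -> a k1 < a k2) ->
  (* contraction ratios *)
  (forall i, 0 < `|rho i| < 1) ->
  (* the laps, left to right, are the images f_i(I) *)
  injective sigma ->
  (forall l, ifs rho varrho (sigma l) @` Iset a = lap_set a h l) ->
  (* I is the union of the hole and the f_i(I) *)
  Iset a = hole a h `|` \bigcup_(i in setT) (ifs rho varrho i @` Iset a) ->
  (* forward orbits of one-sided endpoints are finite *)
  (forall e, endpt a e -> finite_set (fwd_orbit a h rho varrho sigma e)) ->
  (* y^(1), ..., y^(q): these points, listed in increasing order along I *)
  (forall i j : 'I_q, (i < j)%N -> oslt (y i) (y j)) ->
  (forall p, inY a h rho varrho sigma p <-> exists i, y i = p) ->
  forall (i1 i2 : 'I_q) (j : 'I_n),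
    lap_of a h (y i1) = Some j -> lap_of a h (y i2) = Some j ->
    Umx a h y *m Vbeta a h rho varrho sigma beta y *m delta_mx i1 (ord0 : 'I_1)
    = Umx a h y *m Vbeta a h rho varrho sigma beta y *m delta_mx i2 (ord0 : 'I_1).
Proof.
move=> a_incr rho_bds _ lap_image _ _ y_sorted yE i1 i2 j yi1 yi2.
have rho_neq0 i : rho i != 0 by rewrite -normr_gt0; case/andP: (rho_bds i).
have colUV := col_Umx_Vbeta beta a_incr rho_neq0 lap_image y_sorted yE.
by rewrite -!colE (colUV _ _ yi1) (colUV _ _ yi2) /vcoef /Fder yi1 yi2.
Qed.
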